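(* In the setting described in the context: (i) For all $\lambda,\mu\in\mathbb{R}^m$ and any point $x_\mu\in\mathbb{R}^n$, setting $\bar d(\mu):=\mathcal{L}_\beta(x_\mu;\mu)$ and $\nabla\bar d(\mu):=Ax_\mu-b$, we have $$d(\lambda)\le\bar d(\mu)+\langle\nabla\bar d(\mu),\lambda-\mu\rangle.$$ (ii) If $\{x^k\}$, $\{\lambda^k\}$ are generated by the IAL framework described in the context, then for every $k\ge1$, $$d(\lambda^{k+1})\ge\mathcal{L}_\beta(x^{k+1};\lambda^k)+\frac\beta2\|Ax^{k+1}-b\|^2-\eta_k.$$
   Context: Let $A\in\mathbb{R}^{m\times n}$ and $b\in\mathbb{R}^m$. Let $f:\mathbb{R}^n\to\mathbb{R}$ be convex and differentiable with Lipschitz continuous gradient. Let $g:\mathbb{R}^n\to\mathbb{R}\cup\{+\infty\}$ be a closed proper convex (possibly nonsmooth) function with bounded domain. Fix a penalty parameter $\beta>0$. For $\lambda\in\mathbb{R}^m$, define $$\hat f_\beta(x;\lambda):=f(x)+\langle\lambda,Ax-b\rangle+\tfrac{\beta}{2}\|Ax-b\|^2,\qquad \mathcal{L}_\beta(x;\lambda):=\hat f_\beta(x;\lambda)+g(x),$$ and $d(\lambda):=\min_{x\in\mathbb{R}^n}\mathcal{L}_\beta(x;\lambda)$. Here $\nabla\hat f_\beta(x;\lambda)$ denotes the gradient of $\hat f_\beta$ with respect to $x$. IAL framework: choose $x^1\in\operatorname{dom} g$, $\lambda^1\in\mathbb{R}^m$, and a nonnegative sequence $\{\eta_k\}$. For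 $k=1,2,\dots$: find a point $x^{k+1}$ such that $$\max_{x\in\mathbb{R}^n}\Big\{\langle\nabla\hat f_\beta(x^{k+1};\lambda^k),\,x^{k+1}-x\rangle+g(x^{k+1})-g(x)\Big\}\le\eta_k,$$ and then set $\lambda^{k+1}=\lambda^k+\beta(Ax^{k+1}-b)$. *)

From HB Require Import structures.
From mathcomp Require Import all_boot all_order all_algebra.
From mathcomp Require Import all_classical all_reals all_analysis.
Set Implicit Arguments. Unset Strict Implicit. Unset Printing Implicit Defensive.
Import Order.TTheory GRing.Theory Num.Theory numFieldNormedType.Exports.
Local Open Scope classical_set_scope.
Local Open Scope ring_scope.

Section IAL.
Variable R : realType.

Definition dotv (n : nat) (u v : 'cV[R]_n) : R := \sum_(i < n) u i 0 * v i 0.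
Definition enorm (n : nat) (u : 'cV[R]_n) : R := Num.sqrt (dotv u u).

Definition is_gradient (n : nat) (F : 'cV[R]_n -> R) (G : 'cV[R]_n -> 'cV[R]_n) :=
  forall x, differentiable F x /\ forall v, 'd F x v = dotv (G x) v.

Definition lipschitz_map (n : nat) (G : 'cV[R]_n -> 'cV[R]_n) :=
  exists L : R, forall x y, enorm (G x - G y) <= L * enorm (x - y).

Definition edom (n : nat) (g : 'cV[R]_n -> \bar R) := [set x | (g x < +oo)%E].

Definition proper_fun (n : nat) (g : 'cV[R]_n -> \bar R) :=
  (exists x, (g x < +oo)%E) /\ (forall x, (-oo < g x)%E).

Definition closed_fun (n : nat) (g : 'cV[R]_n -> \bar R) :=
  closed [set p : 'cV[R]_n * R | (g p.1 <= p.2%:E)%E].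

Definition convex_efun (n : nat) (g : 'cV[R]_n -> \bar R) :=
  forall (x y : 'cV[R]_n) (t : R), 0 <= t <= 1 ->
    (g (t *: x + (1 - t) *: y)%R <= t%:E * g x + (1 - t)%:E * g y)%E.

Definition convex_rfun (n : nat) (f : 'cV[R]_n -> R) :=
  forall (x y : 'cV[R]_n) (t : R), 0 <= t <= 1 ->
    f (t *: x + (1 - t) *: y) <= t * f x + (1 - t) * f y.

Definition bounded_dom (n : nat) (g : 'cV[R]_n -> \bar R) :=
  exists M : R, forall x, (g x < +oo)%E -> enorm x <= M.

Variables (m n : nat) (A : 'M[R]_(m, n)) (b : 'cV[R]_m) (f : 'cV[R]_n -> R)
  (g : 'cV[R]_n -> \bar R) (beta : R).

Definition fhat (lam : 'cV[R]_m) (x : 'cV[R]_n) : R :=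
  f x + dotv lam (A *m x - b) + beta / 2 * dotv (A *m x - b) (A *m x - b).

Definition Lbeta (x : 'cV[R]_n) (lam : 'cV[R]_m) : \bar R := ((fhat lam x)%:E + g x)%E.

(* d(lambda) = min_x L_beta(x; lambda), taken as the infimum *)
Definition dual (lam : 'cV[R]_m) : \bar R := ereal_inf [set Lbeta x lam | x in setT].

(* the IAL framework; gradhat lam is the gradient of fhat lam *)
Definition IAL_iterates (gradhat : 'cV[R]_m -> 'cV[R]_n -> 'cV[R]_n)
  (x : nat -> 'cV[R]_n) (lam : nat -> 'cV[R]_m) (eta : nat -> R) :=
  [/\ (g (x 1%N) < +oo)%E,
      (forall k, 0 <= eta k),
      (forall k, (1 <= k)%N -> forall z : 'cV[R]_n, (g z < +oo)%E ->
         ((dotv (gradhat (lam k) (x k.+1)) (x k.+1 - z)%R)%:E + g (x k.+1) - g z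
           <= (eta k)%:E)%E) &
      (forall k, (1 <= k)%N -> lam k.+1 = lam k + beta *: (A *m x k.+1 - b))].

End IAL.

From HB Require Import structures.
From mathcomp Require Import all_boot all_order all_algebra.
From mathcomp Require Import all_classical all_reals all_analysis.
From mathcomp Require Import ring lra.
Set Implicit Arguments. Unset Strict Implicit.
Import Order.TTheory GRing.Theory Num.Theory numFieldNormedType.Exports.
Local Open Scope classical_set_scope.
Local Open Scope ring_scope.

(* Part (i) is weak duality: d is an infimum of functions affine in the
   multiplier.  For part (ii), convexity of f makes fhat_lam dominate its
   linearization at x^{k+1} plus (beta/2)|A(z - x^{k+1})|^2; after the
   multiplier update this quadratic term completes the square
   (beta/2)|A z - b|^2 >= 0, and the eta_k-optimality of x^{k+1} absorbs the
   linear term together with g. *)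

Section DotProduct.
Variables (R : realType) (k : nat).
Implicit Types u v w : 'cV[R]_k.

Lemma dotvC u v : dotv u v = dotv v u.
Proof. by apply: eq_bigr => i _; rewrite mulrC. Qed.

Lemma dotvDr u v w : dotv u (v + w) = dotv u v + dotv u w.
Proof. by rewrite /dotv -big_split; apply: eq_bigr => i _; rewrite !mxE mulrDr. Qed.

Lemma dotvZr u v (t : R) : dotv u (t *: v) = t * dotv u v.
Proof. by rewrite /dotv mulr_sumr; apply: eq_bigr => i _; rewrite !mxE mulrCA. Qed.

Lemma dotvNr u v : dotv u (- v) = - dotv u v.
Proof. by rewrite -scaleN1r dotvZr mulN1r. Qed.

Lemma dotvDl u v w : dotv (v + w) u = dotv v u + dotv w u.
Proof. by rewrite dotvC dotvDr !(dotvC u). Qed.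

Lemma dotvZl u v (t : R) : dotv (t *: v) u = t * dotv v u.
Proof. by rewrite dotvC dotvZr dotvC. Qed.

Lemma dotv_ge0 u : 0 <= dotv u u.
Proof. by apply: sumr_ge0 => i _; rewrite -expr2 sqr_ge0. Qed.

Lemma dotvDD u w : dotv (u + w) (u + w) = dotv u u + 2 * dotv u w + dotv w w.
Proof. by rewrite !dotvDl !dotvDr (dotvC w u); ring. Qed.

End DotProduct.

(* Dividing the bound by t and letting t -> 0+ kills the t^2 term. *)
Lemma diff_le_of_secant_bound (R : realType) (V : normedModType R)
    (F : V -> R) (y v : V) (c K : R) :
  differentiable F y ->
  (forall t : R, 0 < t -> t <= 1 -> F (t *: v + y) - F y <= t * c + t ^+ 2 * K) ->
  'd F y v <= c.
Proof.
move=> dF secant.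
rewrite -deriveE //.
set q := fun h : R => h^-1 *: ((F \o shift y) (h *: v) - F y).
have q_cvg : q @ 0^'+ --> 'D_v F y.
  by move=> P /(@diff_derivable _ _ _ _ _ v dF); apply: within_subset => t /= /lt0r_neq0.
have qK_cvg : (fun t => q t - t * K) @ 0^'+ --> 'D_v F y.
  rewrite -[X in _ --> X]subr0; apply: cvgB => //.
  rewrite -[X in _ --> X](mul0r K); apply: cvgM; last exact: cvg_cst.
  exact/cvg_at_right_filter/cvg_id.
rewrite -(cvg_lim _ qK_cvg) //.
apply: limr_le; first by apply/cvg_ex; exists ('D_v F y).
near=> t.
have t_gt0 : 0 < t by near: t; exact: nbhs_right_gt.
have t_le1 : t <= 1 by near: t; apply: nbhs_right_ltW; exact: ltr01.
rewrite /q /= lerBlDr ler_pdivrMl //.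
have -> : t * (c + t * K) = t * c + t ^+ 2 * K by rewrite expr2; ring.
exact: secant.
Unshelve. all: by end_near.
Qed.

Section AugmentedLagrangian.
Variables (R : realType) (m n : nat) (A : 'M[R]_(m, n)) (b : 'cV[R]_m)
  (f : 'cV[R]_n -> R) (g : 'cV[R]_n -> \bar R) (beta : R).

Local Notation fhat := (fhat A b f beta).
Local Notation Lbeta := (Lbeta A b f g beta).
Local Notation dual := (dual A b f g beta).

Lemma fhatD_multiplier (lam mu : 'cV[R]_m) x :
  fhat (lam + mu) x = fhat lam x + dotv (A *m x - b) mu.
Proof. by rewrite /fhat dotvDl (dotvC mu); ring. Qed.

Lemma dual_le_linearization (lam mu : 'cV[R]_m) x :
  (dual lam <= Lbeta x mu + (dotv (A *m x - b) (lam - mu))%:E)%E.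
Proof.
apply: ge_ereal_inf; exists (Lbeta x lam); first by exists x.
by rewrite /Lbeta -[in fhat lam x](subrKC mu lam) fhatD_multiplier EFinD addeAC.
Qed.

Hypothesis f_convex : convex_rfun f.

(* The affine-quadratic part of fhat satisfies this with equality; f satisfies
   it by convexity. *)
Lemma fhat_secant_le (lam : 'cV[R]_m) (y z : 'cV[R]_n) (t : R) :
  0 <= t <= 1 ->
  fhat lam (t *: (z - y) + y) - fhat lam y <=
    t * (fhat lam z - fhat lam y - beta / 2 * dotv (A *m (z - y)) (A *m (z - y)))
    + t ^+ 2 * (beta / 2 * dotv (A *m (z - y)) (A *m (z - y))).
Proof.
move=> t01; set Av := A *m (z - y).
have f_le := f_convex z y t01.
have convex_comb : t *: (z - y) + y = t *: z + (1 - t) *: y.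
  by apply/matrixP => i j; rewrite !mxE; ring.
rewrite -{}convex_comb in f_le; set r := A *m y - b.
have Az : A *m z - b = Av + r by rewrite /Av /r mulmxBr addrA subrK.
have Azt : A *m (t *: (z - y) + y) - b = t *: Av + r.
  by rewrite mulmxDr scalemxAr /r addrA.
rewrite /fhat Azt Az -/r !dotvDD !dotvDr !dotvZl !dotvZr.
nra.
Qed.

Lemma fhat_gradient_ineq (lam : 'cV[R]_m) (G : 'cV[R]_n -> 'cV[R]_n) y z :
  is_gradient (fhat lam) G ->
  fhat lam y + dotv (G y) (z - y) + beta / 2 * dotv (A *m (z - y)) (A *m (z - y))
    <= fhat lam z.
Proof.
move=> /(_ y) [dF dG].
have := diff_le_of_secant_bound (v := z - y) dF (fun t t0 t1 =>
  fhat_secant_le lam y z (t := t) ltac:(by rewrite (ltW t0) t1)).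
by rewrite dG; lra.
Qed.

Hypothesis beta_ge0 : 0 <= beta.

Lemma fhat_update_lower_bound (lam : 'cV[R]_m) (G : 'cV[R]_n -> 'cV[R]_n) y z :
  is_gradient (fhat lam) G ->
  fhat lam y + dotv (G y) (z - y) + beta / 2 * dotv (A *m y - b) (A *m y - b)
    <= fhat (lam + beta *: (A *m y - b)) z.
Proof.
move=> gradG; set r := A *m y - b.
have := fhat_gradient_ineq y z gradG.
set Av := A *m (z - y).
have Az : A *m z - b = Av + r by rewrite /Av /r mulmxBr addrA subrK.
have sq_ge0 : 0 <= beta / 2 * dotv Av Av + beta * dotv Av r + beta / 2 * dotv r r.
  have -> : beta / 2 * dotv Av Av + beta * dotv Av r + beta / 2 * dotv r r
            = beta / 2 * dotv (Av + r) (Av + r) :> R by rewrite (dotvDD Av r); field.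
  by rewrite mulr_ge0 ?dotv_ge0 ?divr_ge0.
rewrite fhatD_multiplier Az dotvZr (dotvDl r Av r); lra.
Qed.

Hypothesis g_proper : proper_fun g.

Lemma dual_ge_of_approx_minimizer (lam : 'cV[R]_m) (G : 'cV[R]_n -> 'cV[R]_n)
    (y : 'cV[R]_n) (eta : R) :
  is_gradient (fhat lam) G ->
  (forall z, (g z < +oo)%E ->
     ((dotv (G y) (y - z))%:E + g y - g z <= eta%:E)%E) ->
  (Lbeta y lam + (beta / 2 * dotv (A *m y - b) (A *m y - b) - eta)%:E
    <= dual (lam + beta *: (A *m y - b)))%E.
Proof.
move=> gradG approx; set r := A *m y - b.
have [[z0 gz0_fin] g_gtNy] := g_proper.
(* g y is finite, since otherwise the optimality test at z0 would read +oo <= eta. *)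
have [gy gyE] : exists gy, g y = gy%:E.
  have := approx z0 gz0_fin; move: gz0_fin (g_gtNy z0) (g_gtNy y).
  by case: (g z0) => // ?; case: (g y) => // gy *; exists gy.
apply: le_ereal_inf_tmp => _ [z _ <-].
case gzE : (g z) (g_gtNy z) => [gz| |] // _; last first.
  by rewrite /Lbeta gzE addey // leey.
have := approx z; rewrite gyE gzE ltry -!EFinD lee_fin => /(_ isT) opt.
have ub := fhat_update_lower_bound y z gradG; rewrite -/r in ub.
have Gflip : dotv (G y) (z - y) = - dotv (G y) (y - z) by rewrite -dotvNr opprB.
rewrite /Lbeta gyE gzE -!EFinD lee_fin; lra.
Qed.

End AugmentedLagrangian.

Theorem lemma1 (R : realType) (m n : nat) (A : 'M[R]_(m, n)) (b : 'cV[R]_m)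
  (f : 'cV[R]_n -> R) (gradf : 'cV[R]_n -> 'cV[R]_n) (g : 'cV[R]_n -> \bar R)
  (beta : R) (gradhat : 'cV[R]_m -> 'cV[R]_n -> 'cV[R]_n) :
  convex_rfun f -> is_gradient f gradf -> lipschitz_map gradf ->
  closed_fun g -> proper_fun g -> convex_efun g -> bounded_dom g ->
  0 < beta ->
  (forall lam, is_gradient (fhat A b f beta lam) (gradhat lam)) ->
  (* (i) *)
  (forall (lam mu : 'cV[R]_m) (xmu : 'cV[R]_n),
     (dual A b f g beta lam
       <= Lbeta A b f g beta xmu mu + (dotv (A *m xmu - b) (lam - mu))%:E)%E) /\
  (* (ii) *)
  (forall (x : nat -> 'cV[R]_n) (lam : nat -> 'cV[R]_m) (eta : nat -> R),
     IAL_iterates A b g beta gradhat x lam eta ->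
     forall k : nat, (1 <= k)%N ->
       (Lbeta A b f g beta (x k.+1) (lam k)
         + (beta / 2 * dotv (A *m x k.+1 - b) (A *m x k.+1 - b) - eta k)%:E
        <= dual A b f g beta (lam k.+1))%E).
Proof.
move=> f_convex _ _ _ g_proper _ _ beta_gt0 gradhatP; split.
  exact: dual_le_linearization.
move=> x lam eta [_ _ approx update] k k_ge1.
rewrite update //.
apply: dual_ge_of_approx_minimizer => //; first exact: ltW.
exact: approx.
Qed.
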